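(* Let $\mathbf x_i$ denote $\mathbf m^t_i+\widehat{\nabla}_{\boldsymbol{\theta}} f_{\mathcal{B}_i}(\boldsymbol{\theta})$ for $i=1,\ldots,n$, and suppose $\mathbb{E}\|\mathrm{CLT}^k_i(\mathbf x_j)-\mathbf x_j\|^2\le\gamma_j\,\mathbb{E}\|\mathbf x_j\|^2$ for all $\mathbf x_i,\mathbf x_j$. Assume that gradients at different workers are positively correlated, i.e., there exists a positive constant $\kappa$ such that $\mathbb{E}[\mathbf x^T_i\mathbf x_j]\ge\kappa \|\mathbf x_i\|\|\mathbf x_j\|$ for all $i,j$, and that $\mathbb{E}\|\mathbf x_i\|^2=\mathbb{E}\|\mathbf x_j\|^2$ for all $i,j$. Then, if $\kappa>\big(n\sum^n_{i=1}\gamma_i-1\big)/\big(n(n-1)\big)$, we have $\gamma=\frac{ n\sum^n_{i=1}\gamma_i}{1+\kappa n(n-1)}<1$ such that $\mathbb{E}\|\mathbf y-\mathrm{CLT}^k_i(\mathbf y)\|^2\le\gamma\,\mathbb{E}\|\mathbf y\|^2$, where $\mathbf y=\frac{1}{n}\sum^n_{i=1}\mathbf x_i$.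
   Context: Distributed training with $n\ge 2$ workers minimizes $f(\boldsymbol{\theta})=\frac{1}{n}\sum_{i=1}^n f_i(\boldsymbol{\theta})$, $f_i(\boldsymbol{\theta})=\mathbb{E}_{\xi_i\sim\mathcal{D}}F(\boldsymbol{\theta},\xi_i)$ with identical data distribution $\mathcal{D}$ at all workers. Worker $i$ uses a mini-batch $\mathcal{B}_i$ and stochastic gradient estimate $\widehat{\nabla}_{\boldsymbol{\theta}} f_{\mathcal{B}_i}(\boldsymbol{\theta})=|\mathcal{B}_i|^{-1}\sum_{j\in\mathcal{B}_i}\nabla_{\boldsymbol{\theta}} f_{i,j}(\boldsymbol{\theta})$, and keeps a local memory (gradient residue / error feedback) $\mathbf m^t_i$ at iteration $t$. For a vector $\mathbf x$, $\mathcal{I}^k(\mathbf x)$ denotes the index set of its $k$ largest entries in magnitude. The cyclic local top-$k$ compressor with worker $i$ as leader, $\mathrm{CLT}^k_i:\mathbb{R}^p\to\mathbb{R}^p$, is defined entrywise by $[\mathrm{CLT}^k_i(\mathbf x_j)]_m=(\mathbf x_j)_m$ if $m\in\mathcal{I}^k(\mathbf x_i)$ and $0$ otherwise, i.e., every worker's vector is sparsified using the top-$k$ indices of the leader's vector $\mathbf x_i$; it is linear in its argument for a fixed leader index set (so $\mathrm{CLT}^k_i(\frac1n\sum_j\mathbf x_j)=\frac1n\sum_j\mathrm{CLT}^k_i(\mathbf x_j)$). *)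

From HB Require Import structures.
From mathcomp Require Import all_boot all_order all_algebra.
From mathcomp Require Import all_classical all_reals all_analysis.
Set Implicit Arguments. Unset Strict Implicit. Unset Printing Implicit Defensive.
Import Order.TTheory GRing.Theory Num.Theory.
Local Open Scope ring_scope.

Section Defs.
Variable R : realType.
Variable p : nat.

Definition beats (v : 'rV[R]_p) (j i : 'I_p) : bool :=
  (`|v 0 i| < `|v 0 j|) || ((`|v 0 j| == `|v 0 i|) && (j < i)%N).

(* I^k(v): indices of the k largest entries of v in magnitude
   (exactly min(k,p) indices; ties broken by index). *)
Definition topk (k : nat) (v : 'rV[R]_p) : {set 'I_p} :=
  [set i | #|[set j | beats v j i]| < k]%N.

(* Cyclic local top-k compressor with leader vector [lead]:
   keep the entries of x on I^k(lead), zero elsewhere. *)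
Definition CLT (k : nat) (lead x : 'rV[R]_p) : 'rV[R]_p :=
  \row_m (if m \in topk k lead then x 0 m else 0).

Definition sqnorm (x : 'rV[R]_p) : R := \sum_m x 0 m ^+ 2.
Definition dotv (x y : 'rV[R]_p) : R := \sum_m x 0 m * y 0 m.
End Defs.

(* Fix the leader i and let S be the common value of E|x_j|^2.  Since CLT_i is
   linear for a fixed leader, y - CLT_i(y) is the average of the residues
   x_j - CLT_i(x_j), so convexity of the squared norm and the compression
   hypothesis give E|y - CLT_i(y)|^2 <= (sum_j gam_j) S / n.  Expanding |y|^2
   into inner products, the correlation hypothesis gives
   E|y|^2 >= S (1 + kappa (n - 1)) / n, and comparing the two bounds yields the
   ratio gamma; gamma < 1 is a rearrangement of the hypothesis on kappa. *)
From HB Require Import structures.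
From mathcomp Require Import all_boot all_order all_algebra.
From mathcomp Require Import all_classical all_reals all_analysis.
From mathcomp Require Import ring lra measurable_realfun.
Import Order.TTheory GRing.Theory Num.Theory.
Local Open Scope ring_scope.
Set Implicit Arguments. Unset Strict Implicit. Unset Printing Implicit Defensive.

Section SquaredNorm.
Variables (R : realType) (p : nat).
Implicit Types (u v : 'rV[R]_p).

Lemma sqnorm_ge0 v : 0 <= sqnorm v.
Proof. by apply: sumr_ge0 => m _; rewrite sqr_ge0. Qed.

Lemma sqnormZ c v : sqnorm (c *: v) = c ^+ 2 * sqnorm v.
Proof. by rewrite /sqnorm mulr_sumr; apply: eq_bigr => m _; rewrite mxE exprMn. Qed.

Lemma sqnormBC u v : sqnorm (u - v) = sqnorm (v - u).
Proof. by rewrite -opprB; apply: eq_bigr => m _; rewrite mxE sqrrN. Qed.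

Lemma dotvv v : dotv v v = sqnorm v.
Proof. by apply: eq_bigr => m _; rewrite expr2. Qed.

Lemma sqnorm_sum n (v : 'I_n -> 'rV[R]_p) :
  sqnorm (\sum_j v j) = \sum_a \sum_b dotv (v a) (v b).
Proof.
rewrite /sqnorm /dotv.
under eq_bigr => m _ do rewrite summxE expr2 mulr_suml.
rewrite exchange_big; apply: eq_bigr => a _.
under eq_bigr => m _ do rewrite mulr_sumr.
by rewrite exchange_big.
Qed.

Lemma normr_dotv_le u v : `|dotv u v| *+ 2 <= sqnorm u + sqnorm v.
Proof.
apply: (@le_trans _ _ ((\sum_m `|u 0 m * v 0 m|) *+ 2)).
  by rewrite lerMn2r ler_norm_sum orbT.
rewrite /sqnorm -sumrMnl -big_split /=; apply: ler_sum => m _.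
have := sqr_ge0 (`|u 0 m| - `|v 0 m|).
by rewrite sqrrB !real_normK ?num_real // normrM; lra.
Qed.

Lemma sqnorm_sum_le n (v : 'I_n -> 'rV[R]_p) :
  sqnorm (\sum_j v j) <= n%:R * \sum_j sqnorm (v j).
Proof.
rewrite -(ler_pMn2r (_ : 0 < 2)%N) //.
have -> : (n%:R * \sum_j sqnorm (v j)) *+ 2
          = \sum_a \sum_b (sqnorm (v a) + sqnorm (v b)).
  under [RHS]eq_bigr do rewrite big_split /= sumr_const card_ord.
  by rewrite big_split /= sumrMnl sumr_const card_ord mulr_natl mulr2n.
rewrite sqnorm_sum -sumrMnl; apply: ler_sum => a _.
rewrite -sumrMnl; apply: ler_sum => b _.
apply: le_trans (normr_dotv_le _ _).
by rewrite lerMn2r ler_norm orbT.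
Qed.

Lemma sqnorm_mean_le n (v : 'I_n -> 'rV[R]_p) :
  sqnorm (n%:R^-1 *: \sum_j v j) <= n%:R^-1 * \sum_j sqnorm (v j).
Proof.
rewrite sqnormZ expr2 -mulrA.
have [n0|n_gt0] := posnP n; first by rewrite [in n%:R]n0 invr0 !mul0r.
rewrite ler_pM2l ?invr_gt0 ?ltr0n // ler_pdivrMl ?ltr0n //.
exact: sqnorm_sum_le.
Qed.

End SquaredNorm.

Section CLTLinear.
Variables (R : realType) (p k : nat) (l : 'rV[R]_p).

Lemma CLTZ c (v : 'rV[R]_p) : CLT k l (c *: v) = c *: CLT k l v.
Proof. by apply/rowP => m; rewrite !mxE; case: ifP; rewrite ?mulr0. Qed.

Lemma CLT_sum n (v : 'I_n -> 'rV[R]_p) :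
  CLT k l (\sum_j v j) = \sum_j CLT k l (v j).
Proof.
apply/rowP => m; rewrite mxE !summxE.
under [RHS]eq_bigr do rewrite mxE.
by case: ifP => _; rewrite ?big1_eq.
Qed.

Lemma scaled_sum_sub_CLT n (v : 'I_n -> 'rV[R]_p) c :
  c *: \sum_j v j - CLT k l (c *: \sum_j v j) = c *: \sum_j (v j - CLT k l (v j)).
Proof. by rewrite CLTZ CLT_sum -scalerBr sumrB. Qed.

Lemma sqnorm_CLT_sub_le (v : 'rV[R]_p) : sqnorm (CLT k l v - v) <= sqnorm v.
Proof.
apply: ler_sum => m _; rewrite !mxE.
by case: ifP => _; rewrite ?subrr ?sub0r ?sqrrN // expr0n sqr_ge0.
Qed.

End CLTLinear.

Lemma sum_diag_offdiag_ge (R : numDomainType) n (c : 'I_n -> 'I_n -> R) s t :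
  (forall a, c a a = s) -> (forall a b, a != b -> t <= c a b) ->
  n%:R * (s + (n%:R - 1) * t) <= \sum_a \sum_b c a b.
Proof.
move=> diag offdiag.
have row a : s - t + t *+ n <= \sum_b c a b.
  have -> : \sum_b c a b = \sum_b (c a b - t) + t *+ n.
    by rewrite sumrB sumr_const card_ord subrK.
  rewrite lerD2r (bigD1 a) //= diag lerDl.
  by apply: sumr_ge0 => b ba; rewrite subr_ge0 offdiag // eq_sym.
apply: le_trans (ler_sum _ (fun a _ => row a)).
by rewrite sumr_const card_ord (_ : _ * _ = (s - t + t *+ n) *+ n) //; ring.
Qed.

Lemma compression_ratio_lt1 (R : realFieldType) (N G kappa : R) :
  2 <= N -> 0 < kappa -> (N * G - 1) / (N * (N - 1)) < kappa ->
  N * G / (1 + kappa * N * (N - 1)) < 1.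
Proof.
move=> N_ge2 kappa_gt0; have NN1 : 0 < N * (N - 1) by apply: mulr_gt0; lra.
have D_gt0 : 0 < 1 + kappa * N * (N - 1).
  by rewrite -mulrA; have := mulr_gt0 kappa_gt0 NN1; lra.
by rewrite ltr_pdivrMr // ltr_pdivrMr // mul1r -mulrA; lra.
Qed.

Lemma compression_bound (R : realFieldType) (N G kappa S L Y : R) :
  1 <= N -> 0 < kappa -> 0 <= S -> 0 <= L -> L <= G * S / N ->
  N^-1 * (S + (N - 1) * (kappa * S)) <= Y -> Y <= S ->
  L <= N * G / (1 + kappa * N * (N - 1)) * Y.
Proof.
move=> N_ge1 kappa_gt0 S_ge0 L_ge0 L_le Y_ge Y_le.
have N_gt0 : 0 < N by lra.
set D := 1 + kappa * N * (N - 1).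
have D_gt0 : 0 < D.
  have : 0 <= kappa * N by rewrite mulr_ge0 // ltW.
  rewrite /D; nra.
have [G_ge0|G_lt0] := leP 0 G.
  have gamma_ge0 : 0 <= N * G / D by rewrite divr_ge0 ?mulr_ge0 // ltW.
  apply: le_trans L_le (le_trans _ (ler_wpM2l gamma_ge0 Y_ge)).
  rewrite -subr_ge0.
  have -> : N * G / D * (N^-1 * (S + (N - 1) * (kappa * S))) - G * S / N
            = G * S * (N - 1) / (N * D) by rewrite /D; field; rewrite !gt_eqF.
  by rewrite divr_ge0 ?mulr_ge0 ?subr_ge0 // ltW ?mulr_gt0.
(* With [G < 0] the bound [0 <= L <= G S / N] forces [S = 0], hence [Y = 0]. *)
have S_eq0 : S = 0.
  apply/eqP; rewrite eq_le S_ge0 andbT leNgt; apply/negP => S_gt0.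
  have : G * S / N < 0 by rewrite pmulr_llt0 ?invr_gt0 // pmulr_llt0.
  lra.
move: L_le Y_ge Y_le; rewrite S_eq0 !(mul0r, mulr0, addr0) => L_le0 Y_ge0 Y_le0.
have -> : Y = 0 by apply/eqP; rewrite eq_le Y_le0 Y_ge0.
by rewrite mulr0.
Qed.

Section RowMeasurable.
Variables (R : realType) (d : measure_display) (T : measurableType d) (p : nat).
Implicit Types (u v l : T -> 'rV[R]_p).

Definition row_measurable v := forall m, measurable_fun setT (fun w => v w 0 m).

Lemma measurable_sqnorm v : row_measurable v ->
  measurable_fun setT (fun w => sqnorm (v w)).
Proof. by move=> mv; apply: measurable_sum => m; apply: measurable_funX. Qed.

Lemma measurable_dotv u v : row_measurable u -> row_measurable v ->
  measurable_fun setT (fun w => dotv (u w) (v w)).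
Proof. by move=> mu mv; apply: measurable_sum => m; apply: measurable_funM. Qed.

Lemma row_measurableB u v : row_measurable u -> row_measurable v ->
  row_measurable (fun w => u w - v w).
Proof.
move=> mu mv m; under eq_fun do rewrite !mxE.
exact: measurable_funB.
Qed.

Lemma measurable_mem_topk k l m : row_measurable l ->
  measurable_fun setT (fun w => m \in topk k (l w)).
Proof.
move=> ml.
have mbeats j : measurable_fun setT (fun w => beats (l w) j m).
  apply: measurable_or; first by apply: measurable_fun_ltr; apply: measurableT_comp.
  apply: measurable_and; last exact: measurable_cst.
  by apply: measurable_fun_eqr; apply: measurableT_comp.
have -> : (fun w => m \in topk k (l w))
          = (fun w => \sum_j (if beats (l w) j m then 1 else 0) < k%:R :> R).
  apply: funext => w; rewrite inE -(ltr_nat R) -sum1_card big_mkcond natr_sum.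
  by congr (_ < _); apply: eq_bigr => j _; rewrite inE; case: ifP.
apply: measurable_fun_ltr; last exact: measurable_cst.
by apply: measurable_sum => j; apply: measurable_fun_ifT => //; apply: measurable_cst.
Qed.

Lemma row_measurable_CLT k l v : row_measurable l -> row_measurable v ->
  row_measurable (fun w => CLT k (l w) (v w)).
Proof.
move=> ml mv m; under eq_fun do rewrite mxE.
by apply: measurable_fun_ifT => //; apply: measurable_mem_topk.
Qed.

End RowMeasurable.

Section RealIntegral.
Variables (R : realType) (d : measure_display) (T : measurableType d).
Variable mu : measure T R.
Implicit Types f g : T -> R.

Lemma integral_EFin f : mu.-integrable setT (EFin \o f) ->
  (\int[mu]_w (f w)%:E = (\int[mu]_w f w)%:E)%E.
Proof. by move=> If; rewrite fineK // integrable_fin_num. Qed.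

Lemma integrable_EFin_le f g : measurable_fun setT f -> (forall w, `|f w| <= g w) ->
  mu.-integrable setT (EFin \o g) -> mu.-integrable setT (EFin \o f).
Proof.
move=> mf fg Ig; apply: le_integrable Ig => //; first exact/measurable_EFinP.
by move=> w _; rewrite !abse_EFin lee_fin (le_trans (fg w)) ?ler_norm.
Qed.

Lemma integrable_EFinZl c f : mu.-integrable setT (EFin \o f) ->
  mu.-integrable setT (EFin \o (fun w => c * f w)).
Proof.
move=> If; rewrite (_ : _ \o _ = (fun w => c%:E * (f w)%:E)%E).
  exact: integrableZl.
by apply: funext => w; rewrite /= EFinM.
Qed.

Lemma integrable_EFin_sum I (s : seq I) (F : I -> T -> R) :
  (forall i, mu.-integrable setT (EFin \o F i)) ->
  mu.-integrable setT (EFin \o (fun w => \sum_(i <- s) F i w)).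
Proof.
move=> IF; rewrite (_ : _ \o _ = (fun w => \sum_(i <- s) (F i w)%:E)%E).
  by apply: integrable_sum => // i _; apply: IF.
by apply: funext => w; rewrite /= sumEFin.
Qed.

Lemma Rintegral_sum I (s : seq I) (F : I -> T -> R) :
  (forall i, mu.-integrable setT (EFin \o F i)) ->
  \int[mu]_w (\sum_(i <- s) F i w) = \sum_(i <- s) \int[mu]_w F i w.
Proof.
move=> IF; rewrite /Rintegral.
under eq_integral do rewrite -sumEFin.
rewrite integral_sum //; under eq_bigr do rewrite integral_EFin //.
by rewrite sumEFin.
Qed.

End RealIntegral.

Section Mean.
Variables (R : realType) (d : measure_display) (T : measurableType d).
Variables (mu : measure T R) (p n : nat) (x : 'I_n -> T -> 'rV[R]_p).
Hypothesis mx : forall j, row_measurable (x j).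
Hypothesis ix : forall j, mu.-integrable setT (fun w => (sqnorm (x j w))%:E).

Lemma integrable_dotv a b :
  mu.-integrable setT (fun w => (dotv (x a w) (x b w))%:E).
Proof.
apply: (integrable_EFin_le (g := fun w => \sum_(j <- [:: a; b]) sqnorm (x j w))).
- exact: measurable_dotv.
- move=> w; rewrite !big_cons big_nil addr0.
  by apply: le_trans (normr_dotv_le _ _); rewrite mulr2n lerDl.
- exact: integrable_EFin_sum.
Qed.

Lemma sqnorm_mean_dotv w : sqnorm (n%:R^-1 *: \sum_j x j w)
  = \sum_a \sum_b n%:R ^- 2 * dotv (x a w) (x b w).
Proof.
by rewrite sqnormZ sqnorm_sum exprVn mulr_sumr; under eq_bigr do rewrite mulr_sumr.
Qed.

Lemma integrable_sqnorm_mean :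
  mu.-integrable setT (fun w => (sqnorm (n%:R^-1 *: \sum_j x j w))%:E).
Proof.
under eq_fun do rewrite sqnorm_mean_dotv.
apply: integrable_EFin_sum => a; apply: integrable_EFin_sum => b.
exact/integrable_EFinZl/integrable_dotv.
Qed.

Lemma Rintegral_sqnorm_mean : \int[mu]_w sqnorm (n%:R^-1 *: \sum_j x j w)
  = n%:R ^- 2 * \sum_a \sum_b \int[mu]_w dotv (x a w) (x b w).
Proof.
under eq_Rintegral do rewrite sqnorm_mean_dotv.
rewrite Rintegral_sum; last first.
  by move=> a; apply: integrable_EFin_sum => b; exact/integrable_EFinZl/integrable_dotv.
rewrite mulr_sumr; apply: eq_bigr => a _.
rewrite Rintegral_sum; last by move=> b; exact/integrable_EFinZl/integrable_dotv.
by rewrite mulr_sumr; apply: eq_bigr => b _; rewrite RintegralZl //; apply: integrable_dotv.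
Qed.

Lemma Rintegral_sqnorm_mean_le : \int[mu]_w sqnorm (n%:R^-1 *: \sum_j x j w)
  <= n%:R^-1 * \sum_j \int[mu]_w sqnorm (x j w).
Proof.
have Isum : mu.-integrable setT (EFin \o (fun w => \sum_j n%:R^-1 * sqnorm (x j w))).
  by apply: integrable_EFin_sum => j; apply/integrable_EFinZl/ix.
apply: (@le_trans _ _ (\int[mu]_w \sum_j n%:R^-1 * sqnorm (x j w))).
  apply: le_Rintegral => //; first exact: integrable_sqnorm_mean.
  by move=> w _; rewrite -mulr_sumr; apply: sqnorm_mean_le.
rewrite Rintegral_sum; last by move=> j; apply/integrable_EFinZl/ix.
by rewrite mulr_sumr; apply: ler_sum => j _; rewrite RintegralZl //; apply: ix.
Qed.

End Mean.

Section MeanSubCLT.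
Variables (R : realType) (d : measure_display) (T : measurableType d).
Variables (mu : measure T R) (p n k : nat) (l : T -> 'rV[R]_p).
Hypothesis ml : row_measurable l.

Lemma integrable_sqnorm_CLT_sub (v : T -> 'rV[R]_p) : row_measurable v ->
  mu.-integrable setT (fun w => (sqnorm (v w))%:E) ->
  mu.-integrable setT (fun w => (sqnorm (CLT k (l w) (v w) - v w))%:E).
Proof.
move=> mv iv; apply: integrable_EFin_le iv.
  by apply/measurable_sqnorm/row_measurableB => //; apply: row_measurable_CLT.
by move=> w; rewrite ger0_norm ?sqnorm_ge0 // sqnorm_CLT_sub_le.
Qed.

Variable x : 'I_n -> T -> 'rV[R]_p.
Hypothesis mx : forall j, row_measurable (x j).
Hypothesis ix : forall j, mu.-integrable setT (fun w => (sqnorm (x j w))%:E).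

Let e j w := x j w - CLT k (l w) (x j w).

Let me j : row_measurable (e j).
Proof. by apply: row_measurableB => //; apply: row_measurable_CLT. Qed.

Let ie j : mu.-integrable setT (fun w => (sqnorm (e j w))%:E).
Proof. by under eq_fun do rewrite sqnormBC; apply: integrable_sqnorm_CLT_sub. Qed.

Lemma integrable_sqnorm_mean_sub_CLT : mu.-integrable setT
  (fun w => (sqnorm (n%:R^-1 *: \sum_j x j w - CLT k (l w) (n%:R^-1 *: \sum_j x j w)))%:E).
Proof.
under eq_fun do rewrite scaled_sum_sub_CLT.
exact: (integrable_sqnorm_mean me ie).
Qed.

Lemma Rintegral_sqnorm_mean_sub_CLT_le :
  \int[mu]_w sqnorm (n%:R^-1 *: \sum_j x j w - CLT k (l w) (n%:R^-1 *: \sum_j x j w))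
  <= n%:R^-1 * \sum_j \int[mu]_w sqnorm (CLT k (l w) (x j w) - x j w).
Proof.
under eq_Rintegral do rewrite scaled_sum_sub_CLT.
under [X in _ <= _ * X]eq_bigr do under eq_Rintegral do rewrite sqnormBC.
exact: (Rintegral_sqnorm_mean_le me ie).
Qed.

End MeanSubCLT.

Unset Implicit Arguments. Set Strict Implicit.

Theorem lemma2 (R : realType) (d : measure_display) (T : measurableType d)
  (P : probability T R) (p k n : nat) (hn : (2 <= n)%N)
  (x : 'I_n -> T -> 'rV[R]_p) (gam : 'I_n -> R) (kappa : R) :
  (forall i m, measurable_fun setT (fun w => x i w 0 m)) ->
  (forall i, P.-integrable setT (fun w => (sqnorm (x i w))%:E)) ->
  (forall i j, (\int[P]_w (sqnorm (CLT k (x i w) (x j w) - x j w))%:E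
                <= (gam j)%:E * \int[P]_w (sqnorm (x j w))%:E)%E) ->
  0 < kappa ->
  (forall i j, kappa * Num.sqrt (Rintegral P setT (fun w => sqnorm (x i w)))
                     * Num.sqrt (Rintegral P setT (fun w => sqnorm (x j w)))
               <= Rintegral P setT (fun w => dotv (x i w) (x j w))) ->
  (forall i j, (\int[P]_w (sqnorm (x i w))%:E = \int[P]_w (sqnorm (x j w))%:E)%E) ->
  (n%:R * (\sum_i gam i) - 1) / (n%:R * (n%:R - 1)) < kappa ->
  let gamma := n%:R * (\sum_i gam i) / (1 + kappa * n%:R * (n%:R - 1)) in
  let y := fun w => n%:R^-1 *: \sum_i x i w in
  gamma < 1 /\
  forall i, (\int[P]_w (sqnorm (y w - CLT k (x i w) (y w)))%:E
             <= gamma%:E * \int[P]_w (sqnorm (y w))%:E)%E.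
Proof.
move=> mx ix compress kappa_gt0 correlated same_norm kappa_big gamma y.
have n_gt0 : (0 < n)%N by apply: leq_trans hn.
have n_ge2 : 2 <= n%:R :> R by rewrite (ler_nat R 2 n).
split=> [|i]; first exact: compression_ratio_lt1.
set S := \int[P]_w sqnorm (x i w).
have S_ge0 : 0 <= S by apply: Rintegral_ge0 => w _; apply: sqnorm_ge0.
have ES j : \int[P]_w sqnorm (x j w) = S.
  by apply: EFin_inj; rewrite /S -(integral_EFin (ix j)) -(integral_EFin (ix i)) (same_norm j i).
have ECLT j : \int[P]_w sqnorm (CLT k (x i w) (x j w) - x j w) <= gam j * S.
  have := compress i j; rewrite (integral_EFin (ix j)).
  rewrite (integral_EFin (integrable_sqnorm_CLT_sub k (mx i) (mx j) (ix j))).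
  by rewrite -EFinM lee_fin ES.
rewrite (integral_EFin (integrable_sqnorm_mean mx ix)).
rewrite (integral_EFin (integrable_sqnorm_mean_sub_CLT k (mx i) mx ix)) -EFinM lee_fin.
apply: (compression_bound _ kappa_gt0 S_ge0); first lra.
- by apply: Rintegral_ge0 => w _; apply: sqnorm_ge0.
- apply: le_trans (Rintegral_sqnorm_mean_sub_CLT_le k (mx i) mx ix) _.
  rewrite mulrC ler_wpM2r ?invr_ge0 // mulr_suml.
  by apply: ler_sum => j _; apply: ECLT.
- rewrite (Rintegral_sqnorm_mean mx ix) expr2 invfM -mulrA.
  rewrite ler_wpM2l ?invr_ge0 // ler_pdivlMl ?ltr0n //.
  apply: sum_diag_offdiag_ge => [a|a b _].
    by under eq_Rintegral do rewrite dotvv; apply: ES.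
  by have := correlated a b; rewrite !ES -mulrA -expr2 sqr_sqrtr.
- apply: le_trans (Rintegral_sqnorm_mean_le mx ix) _.
  under eq_bigr do rewrite ES.
  by rewrite sumr_const card_ord -[S *+ n]mulr_natl mulKf // pnatr_eq0 -lt0n.
Qed.
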